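(* Let $\mathbb{G}$ be an $E$-group and $\alpha_1,\alpha_2,\beta\subsetneq E$, and suppose $\mathbb{G}[\alpha_1]$ and $\mathbb{G}[\alpha_2]$ are $2$-acyclic. Then for every vertex $x$ of the free amalgam $\mathrm{Cay}(\mathbb{G}[\alpha_1])\oplus\mathrm{Cay}(\mathbb{G}[\alpha_2])$, the $\beta$-connected component of $x$ is isomorphic, as an $E$-graph, either to $\mathrm{Cay}(\mathbb{G}[\beta\cap\alpha_1])$, or to $\mathrm{Cay}(\mathbb{G}[\beta\cap\alpha_2])$, or to the free amalgam $\mathrm{Cay}(\mathbb{G}[\beta\cap\alpha_1])\oplus\mathrm{Cay}(\mathbb{G}[\beta\cap\alpha_2])$.
   Context: Let $E$ be a finite set. An $E$-group is a group $\mathbb{G}$ with $E\subseteq\mathbb{G}$ generating it and each $e\in E$ satisfying $e\neq1$, $e^2=1$; $\mathbb{G}[\gamma]$ is the subgroup generated by $\gamma\subseteq E$, regarded as a $\gamma$-group. A coset cycle of length $n\ge2$ in a $\gamma$-group $\mathbb{K}$ is $(g_i,\gamma_i)_{i\in\mathbb{Z}_n}$ with $\gamma_i\subseteq\gamma$, $g_{i+1}\in g_i\mathbb{K}[\gamma_i]$ and $g_i\mathbb{K}[\gamma_i\cap\gamma_{i-1}]\cap g_{i+1}\mathbb{K}[\gamma_i\cap\gamma_{i+1}]=\emptyset$; $2$-acyclic means there is no coset cycle of length $2$. An $E$-graph is $(V,(R_e)_{e\in E})$ with each $R_e$ symmetric and each vertex having at most one $R_e$-neighbour; an isomorphism of $E$-graphs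 is a bijection preserving each $R_e$ in both directions. $\mathrm{Cay}(\mathbb{G}[\gamma])$ is the $E$-graph on $\mathbb{G}[\gamma]$ with $R_e=\{(g,ge)\}$ for $e\in\gamma$ and $R_e=\emptyset$ for $e\notin\gamma$. For $\gamma_1,\gamma_2\subseteq E$, the free amalgam $\mathrm{Cay}(\mathbb{G}[\gamma_1])\oplus\mathrm{Cay}(\mathbb{G}[\gamma_2])$ is the $E$-graph whose vertex set is the quotient of $(\mathbb{G}[\gamma_1]\times\{1\})\cup(\mathbb{G}[\gamma_2]\times\{2\})$ obtained by identifying $(g,1)$ with $(g,2)$ for all $g\in\mathbb{G}[\gamma_1\cap\gamma_2]$, and whose $R_e$ is the image of $\bigcup_{i:e\in\gamma_i}\{((g,i),(ge,i)):g\in\mathbb{G}[\gamma_i]\}$. For $\beta\subseteq E$, the $\beta$-connected component of a vertex $x$ is the set of vertices reachable from $x$ along edges in $R_e$ with $e\in\beta$, with the induced $R_e$ for $e\in\beta$ and $R_e=\emptyset$ for $e\notin\beta$. *)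

(* the E-group itself is an arbitrary (possibly infinite) group, given as a record. *)
From Stdlib Require Import Relations.
From mathcomp Require Import all_boot.
Set Implicit Arguments. Unset Strict Implicit. Unset Printing Implicit Defensive.

Record abs_group := AbsGroup {
  gcar :> Type;
  gmul : gcar -> gcar -> gcar;
  gone : gcar;
  ginv : gcar -> gcar;
  gmulA : forall x y z, gmul x (gmul y z) = gmul (gmul x y) z;
  gmul1g : forall x, gmul gone x = x;
  gmulVg : forall x, gmul (ginv x) x = gone
}.

Section EGroups.
Variables (G : abs_group) (E : finType) (emb : E -> G).

Inductive gen (gam : {set E}) : G -> Prop :=
  | gen1 : gen gam (gone G)
  | genE e : e \in gam -> gen gam (emb e)
  | genM x y : gen gam x -> gen gam y -> gen gam (gmul x y)
  | genV x : gen gam x -> gen gam (ginv x).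

Definition is_Egroup : Prop :=
  [/\ injective emb,
      (forall e, emb e <> gone G),
      (forall e, gmul (emb e) (emb e) = gone G) &
      (forall g : G, gen setT g) ].

Definition in_coset (g : G) (gam : {set E}) (x : G) : Prop :=
  exists2 k, gen gam k & x = gmul g k.

(* A coset cycle of length n in the alpha-group G[alpha]
   (for gam \subset alpha, G[alpha][gam] = G[gam]); indices mod n. *)
Definition coset_cycle (alpha : {set E}) (n : nat)
    (g : nat -> G) (gam : nat -> {set E}) : Prop :=
  2 <= n /\
  forall i, i < n ->
    [/\ gen alpha (g i),
        gam i \subset alpha,
        in_coset (g i) (gam i) (g ((i + 1) %% n)) &
        forall x, ~ (in_coset (g i) (gam i :&: gam ((i + n - 1) %% n)) x /\
                     in_coset (g ((i + 1) %% n)) (gam i :&: gam ((i + 1) %% n)) x)].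

Definition two_acyclic (alpha : {set E}) : Prop :=
  ~ exists g gam, coset_cycle alpha 2 g gam.

(* E-graphs presented as setoids: carrier, vertex domain, equality of vertices
   (to present quotients), and the edge relations R_e. *)
Record egraph := EGraph {
  vtx : Type;
  vdom : vtx -> Prop;
  veq : vtx -> vtx -> Prop;
  edge : E -> vtx -> vtx -> Prop
}.
Arguments vdom : clear implicits.
Arguments veq : clear implicits.
Arguments edge : clear implicits.

Definition egraph_iso (A B : egraph) : Prop :=
  exists f : vtx A -> vtx B,
    [/\ (forall x, vdom A x -> vdom B (f x)),
        (forall x y, vdom A x -> vdom A y -> (veq A x y <-> veq B (f x) (f y))),
        (forall y, vdom B y -> exists2 x, vdom A x & veq B (f x) y) &
        (forall e x y, vdom A x -> vdom A y ->
           (edge A e x y <-> edge B e (f x) (f y)))].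

Definition Cay (gam : {set E}) : egraph :=
  @EGraph G (gen gam) (@eq G)
    (fun e g h => [/\ e \in gam, gen gam g & h = gmul g (emb e)]).

(* free amalgam Cay(G[g1]) (+) Cay(G[g2]); the tag true = copy 1, false = copy 2 *)
Definition side (g1 g2 : {set E}) (b : bool) := if b then g1 else g2.

Definition amal_dom (g1 g2 : {set E}) (v : G * bool) : Prop :=
  gen (side g1 g2 v.2) v.1.

Definition amal_eq (g1 g2 : {set E}) (v w : G * bool) : Prop :=
  [/\ amal_dom g1 g2 v, amal_dom g1 g2 w &
      (v = w \/ (v.1 = w.1 /\ gen (g1 :&: g2) v.1))].

Definition amalgam (g1 g2 : {set E}) : egraph :=
  @EGraph (G * bool)%type (amal_dom g1 g2) (amal_eq g1 g2)
    (fun e v w => exists b, exists2 g : G,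
        e \in side g1 g2 b /\ gen (side g1 g2 b) g &
        amal_eq g1 g2 v (g, b) /\ amal_eq g1 g2 w (gmul g (emb e), b)).

Definition comp_step (A : egraph) (beta : {set E}) (v w : vtx A) : Prop :=
  veq A v w \/ exists2 e, e \in beta & edge A e v w.

Definition comp_dom (A : egraph) (beta : {set E}) (x : vtx A) (v : vtx A) : Prop :=
  vdom A v /\ clos_refl_trans _ (@comp_step A beta) x v.

Definition component (A : egraph) (beta : {set E}) (x : vtx A) : egraph :=
  @EGraph (vtx A) (comp_dom beta x) (veq A)
    (fun e v w => [/\ e \in beta, edge A e v w, comp_dom beta x v & comp_dom beta x w]).

End EGroups.
Arguments vdom {E}.
Arguments veq {E}.
Arguments edge {E}.
Arguments component {E} A beta x.

(* Write γ_b = β ∩ α_b and I = α1 ∩ α2. Inside copy b of the amalgam, the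
   β-edges at a vertex g lead exactly through the coset g G[γ_b], and the only
   way to change copies is at the identified vertices G[I]. If the coset
   g0 G[γ_b0] of the starting vertex misses G[I], the component is that coset
   and left translation by g0^-1 identifies it with Cay(G[γ_b0]). Otherwise
   pick h in the coset and in G[I]: the component is h G[γ_1] ∪ h G[γ_2], and
   2-acyclicity of G[α_b] gives G[γ_b] ∩ G[I] = G[γ_1 ∩ γ_2], so left
   translation by h^-1 identifies exactly the right vertices and maps the
   component onto Cay(G[γ_1]) ⊕ Cay(G[γ_2]). *)

From mathcomp Require Import all_boot.
From Stdlib Require Import Classical Relations.
Set Implicit Arguments. Unset Strict Implicit.

Section GroupFacts.
Variable G : abs_group.
Implicit Types x y z : G.

Lemma gmulgV x : gmul x (ginv x) = gone G.
Proof.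
have -> : gmul x (ginv x) = gmul (gmul (ginv (ginv x)) (ginv x)) (gmul x (ginv x)).
  by rewrite gmulVg gmul1g.
by rewrite -gmulA (gmulA (ginv x) x) gmulVg gmul1g gmulVg.
Qed.

Lemma gmulg1 x : gmul x (gone G) = x.
Proof. by rewrite -(gmulVg x) gmulA gmulgV gmul1g. Qed.

Lemma gmulKg x y : gmul (ginv x) (gmul x y) = y.
Proof. by rewrite gmulA gmulVg gmul1g. Qed.

Lemma gmulKVg x y : gmul x (gmul (ginv x) y) = y.
Proof. by rewrite gmulA gmulgV gmul1g. Qed.

Lemma gmulgK x y : gmul (gmul x y) (ginv y) = x.
Proof. by rewrite -gmulA gmulgV gmulg1. Qed.

Lemma gmulI x : injective (gmul x).
Proof. by move=> y z e; rewrite -(gmulKg x y) e gmulKg. Qed.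

Lemma ginvM x y : ginv (gmul x y) = gmul (ginv y) (ginv x).
Proof. by apply: (@gmulI (gmul x y)); rewrite gmulgV -gmulA gmulKVg gmulgV. Qed.

End GroupFacts.

Section Generated.
Variables (G : abs_group) (E : finType) (emb : E -> G).
Local Notation gen := (gen emb).

Lemma genS (a b : {set E}) x : a \subset b -> gen a x -> gen b x.
Proof.
move=> sab; elim=> *; [exact: gen1 | apply: genE | exact: genM | exact: genV].
exact: (subsetP sab).
Qed.

Lemma gen_divr (a : {set E}) x y : gen a x -> gen a y -> gen a (gmul x (ginv y)).
Proof. by move=> gx gy; apply: genM => //; apply: genV. Qed.

Lemma gen_mulE (a : {set E}) g e : e \in a -> gen a g -> gen a (gmul g (emb e)).
Proof. by move=> ea ga; apply: genM => //; apply: genE. Qed.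

Lemma in_coset_meet (a : {set E}) g g' x :
  in_coset emb g a x -> in_coset emb g' a x -> in_coset emb g a g'.
Proof.
move=> [k gk ->] [k' gk' e]; exists (gmul k (ginv k')); first exact: gen_divr.
by rewrite gmulA e gmulgK.
Qed.

Lemma amal_eq_refl (a1 a2 : {set E}) v : amal_dom emb a1 a2 v -> amal_eq emb a1 a2 v v.
Proof. by move=> d; split=> //; left. Qed.

Lemma amal_eq_sym (a1 a2 : {set E}) v w : amal_eq emb a1 a2 v w -> amal_eq emb a1 a2 w v.
Proof. by case=> dv dw [->|[e gv]]; split=> //; [left | right; rewrite -e]. Qed.

(* The coset cycle (1, c0), (h, c1) of length 2 would witness the failure. *)
Lemma two_acyclic_genI (al c0 c1 : {set E}) h : two_acyclic emb al ->
  c0 \subset al -> c1 \subset al -> gen c0 h -> gen c1 h -> gen (c0 :&: c1) h.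
Proof.
move=> acyc s0 s1 g0 g1; apply: NNPP => nh; apply: acyc.
exists (fun i => if i is 0 then gone G else h), (fun i => if i is 0 then c0 else c1).
split=> // -[|[|i]] // _ /=.
- split=> //; [exact: gen1 | by exists h; rewrite ?gmul1g |].
  move=> x [cx hx]; apply: nh; have [k gk] := in_coset_meet cx hx.
  by rewrite gmul1g => ->.
- split=> //; [exact: genS g0 | by exists (ginv h); [apply: genV | rewrite gmulgV] |].
  rewrite setIC => x [hx cx]; apply: nh; have [k gk] := in_coset_meet cx hx.
  by rewrite gmul1g => ->.
Qed.

End Generated.

Section AmalgamComponent.
Variables (G : abs_group) (E : finType) (emb : E -> G).
Hypothesis emb_invol : forall e, gmul (emb e) (emb e) = gone G.
Variables alpha1 alpha2 beta : {set E}.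
Hypotheses (acyc1 : two_acyclic emb alpha1) (acyc2 : two_acyclic emb alpha2).

Local Notation gen := (gen emb).
Local Notation A := (amalgam emb alpha1 alpha2).
Local Notation adom := (amal_dom emb alpha1 alpha2).
Local Notation aeq := (amal_eq emb alpha1 alpha2).
Local Notation sa := (side alpha1 alpha2).
Local Notation gam := (side (beta :&: alpha1) (beta :&: alpha2)).
Local Notation I := (alpha1 :&: alpha2).
Local Notation step := (@comp_step _ A beta).
Local Notation reach := (clos_refl_trans _ step).

Lemma in_gam b e : (e \in gam b) = (e \in beta) && (e \in sa b).
Proof. by case: b; rewrite inE. Qed.

Lemma gam_sub b : gam b \subset sa b.
Proof. by apply/subsetP=> e; rewrite in_gam => /andP[]. Qed.

Lemma I_sub b : I \subset sa b.
Proof. by case: b; [apply: subsetIl | apply: subsetIr]. Qed.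

Lemma gamI b : gam b :&: I = gam true :&: gam false.
Proof. by apply/setP=> e; case: b; rewrite !inE; do 3!case: (_ \in _). Qed.

Lemma gam12_sub : gam true :&: gam false \subset I.
Proof. by rewrite -(gamI true) subsetIr. Qed.

Lemma gen_gamI b g : gen (gam b) g -> gen I g -> gen (gam true :&: gam false) g.
Proof.
have acyc : two_acyclic emb (sa b) by case: b.
by rewrite -(gamI b); apply: two_acyclic_genI acyc (gam_sub b) (I_sub b).
Qed.

Lemma step_sym v w : step v w -> step w v.
Proof.
case=> [/amal_eq_sym | [e eb [b [g [eb' gg] [vg wg]]]]]; first by left.
right; exists e => //; exists b, (gmul g (emb e)); first by split=> //; apply: gen_mulE.
by rewrite -gmulA emb_invol gmulg1.
Qed.

Lemma reach_inv (P : G * bool -> Prop) :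
  (forall v w, P v -> step v w -> P w) -> forall v w, reach v w -> P v -> P w.
Proof. by move=> stP v w; elim=> //; eauto. Qed.

Lemma step_gam b g e : e \in gam b -> gen (sa b) g -> step (g, b) (gmul g (emb e), b).
Proof.
rewrite in_gam => /andP[eb es] gg; right; exists e => //; exists b, g => //.
by split; apply: amal_eq_refl => //; apply: gen_mulE.
Qed.

Lemma reach_coset x b k : gen (gam b) k -> forall g, gen (sa b) g ->
  reach x (g, b) <-> reach x (gmul g k, b).
Proof.
elim=> {k} [|e eg|k1 k2 g1 IH1 g2 IH2|k gk IH] g gg.
- by rewrite gmulg1.
- split=> r; apply: rt_trans r (rt_step _ _ _ _ _); first exact: step_gam.
  by apply: step_sym; apply: step_gam.
- have gk1 : gen (sa b) (gmul g k1) by apply: genM => //; apply: genS (gam_sub b) g1.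
  by rewrite gmulA -(IH2 _ gk1) IH1.
- have gk1 : gen (sa b) (gmul g (ginv k)) by apply: gen_divr => //; apply: genS (gam_sub b) gk.
  by rewrite (IH _ gk1) -gmulA gmulVg gmulg1.
Qed.

Section CosetMissesI.
Variables (g0 : G) (b0 : bool).
Hypothesis gen_g0 : gen (sa b0) g0.
Hypothesis coset_missesI : forall k, gen (gam b0) k -> ~ gen I (gmul g0 k).

Let in_coset0 (v : G * bool) := v.2 = b0 /\ gen (gam b0) (gmul (ginv g0) v.1).

Lemma coset0_aeq v w : in_coset0 v -> aeq v w -> w = v.
Proof.
case: v => g b [_ gk] [_ _ [-> // | [_ gI]]]; case: (coset_missesI gk).
by rewrite gmulKVg.
Qed.

Lemma coset0_mulE v e : in_coset0 v -> e \in gam b0 ->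
  in_coset0 (gmul v.1 (emb e), b0).
Proof. by case=> _ gv eg; split=> //=; rewrite gmulA; apply: gen_mulE. Qed.

Lemma coset0_edge e v w : in_coset0 v -> edge A e v w -> e \in beta ->
  e \in gam b0 /\ w = (gmul v.1 (emb e), b0).
Proof.
case: v => g b cv [b' [g' [es _] [vg wg]]] eb.
case: (coset0_aeq cv vg) => ? ?; subst g' b'.
have bb : b = b0 := cv.1; subst b.
have eg : e \in gam b0 by rewrite in_gam eb es.
by split=> //; exact: (coset0_aeq (coset0_mulE cv eg) (amal_eq_sym wg)).
Qed.

Lemma coset0_step v w : in_coset0 v -> step v w -> in_coset0 w.
Proof.
move=> cv [/(coset0_aeq cv) -> // | [e eb /(coset0_edge cv)[// | eg ->]]].
exact: coset0_mulE.
Qed.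

Lemma reach_coset0 v : reach (g0, b0) v -> in_coset0 v.
Proof.
move/reach_inv; apply=> //; first exact: coset0_step.
by split=> //=; rewrite gmulVg; apply: gen1.
Qed.

Lemma component_iso_Cay : egraph_iso (component A beta (g0, b0)) (Cay emb (gam b0)).
Proof.
exists (fun v => gmul (ginv g0) v.1); split.
- by move=> v [_ /reach_coset0 []].
- move=> [g b] [g' b'] [dv /reach_coset0 cv] [_ /reach_coset0 cw].
  have bb : b = b0 := cv.1; have bb' : b' = b0 := cw.1; subst b b'.
  by split=> [/(coset0_aeq cv) [->] | /gmulI /= <-] //; apply: amal_eq_refl.
- move=> k gk; exists (gmul g0 k, b0); last by rewrite /= gmulKg.
  have dk : gen (sa b0) (gmul g0 k) by apply: genM => //; apply: genS (gam_sub b0) gk.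
  by split=> //; apply/(reach_coset _ gk gen_g0); apply: rt_refl.
- move=> e [g b] [g' b'] cdv cdw.
  have [dv /reach_coset0 cv] := cdv; have [dw /reach_coset0 cw] := cdw.
  have bb : b = b0 := cv.1; have bb' : b' = b0 := cw.1; subst b b'; split.
  + case=> eb /(coset0_edge cv)[// | eg [->]] _ _.
    by split=> //; [exact: cv.2 | rewrite gmulA].
  + case=> eg _; rewrite -gmulA => /gmulI /= ?; subst g'.
    move: (eg); rewrite in_gam => /andP[eb es]; split=> //.
    by exists b0, g => //; split; apply: amal_eq_refl.
Qed.

End CosetMissesI.

Section CosetMeetsI.
Variables (g0 k0 : G) (b0 : bool).
Hypotheses (gen_g0 : gen (sa b0) g0) (gen_k0 : gen (gam b0) k0).
Hypothesis gen_h : gen I (gmul g0 k0).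

Local Notation h := (gmul g0 k0).
Local Notation B := (amalgam emb (gam true) (gam false)).
Local Notation beq := (amal_eq emb (gam true) (gam false)).

Let shift (v : G * bool) := (gmul (ginv h) v.1, v.2).
Let in_cosets v := amal_dom emb (gam true) (gam false) (shift v).

Lemma cosets_genI g b : gen I g -> in_cosets (g, b) ->
  gen (gam true :&: gam false) (gmul (ginv h) g).
Proof. by move=> gI /gen_gamI; apply; apply: genM => //; apply: genV. Qed.

Lemma cosets_aeq u w : in_cosets u -> aeq u w -> in_cosets w.
Proof.
case: u w => g b [g' b'] cu [_ _ [[<- <-] // | [/= <- gI]]].
by apply: genS (cosets_genI gI cu); case: b'; [apply: subsetIl | apply: subsetIr].
Qed.

Lemma cosets_mulE g b e : in_cosets (g, b) -> e \in gam b -> in_cosets (gmul g (emb e), b).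
Proof. by move=> cg eg; rewrite /in_cosets /shift /= gmulA; apply: gen_mulE. Qed.

Lemma cosets_step u w : in_cosets u -> step u w -> in_cosets w.
Proof.
move=> cu [/(cosets_aeq cu) // | [e eb [b [g [es _] [ug /amal_eq_sym wg]]]]].
by apply: cosets_aeq wg; apply: cosets_mulE; [apply: cosets_aeq ug | rewrite in_gam eb].
Qed.

Lemma reach_cosets v : reach (g0, b0) v -> in_cosets v.
Proof.
move/reach_inv; apply; first exact: cosets_step.
by rewrite /in_cosets /shift /= ginvM -gmulA gmulVg gmulg1; apply: genV.
Qed.

Lemma reach_h b : reach (g0, b0) (h, b).
Proof.
have r0 : reach (g0, b0) (h, b0) by apply/(reach_coset _ gen_k0 gen_g0); apply: rt_refl.
apply: rt_trans r0 (rt_step _ _ _ _ _).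
by left; split; [exact: genS (I_sub b0) gen_h | exact: genS (I_sub b) gen_h | right].
Qed.

Lemma gen_side_hmul b k : gen (gam b) k -> gen (sa b) (gmul h k).
Proof.
by move=> gk; apply: genM; [exact: genS (I_sub b) gen_h | exact: genS (gam_sub b) gk].
Qed.

Lemma shift_aeq u v : in_cosets u -> in_cosets v -> adom u -> adom v ->
  aeq u v <-> beq (shift u) (shift v).
Proof.
case: u v => g b [g' b'] cu cv du dv; rewrite /shift /=; split.
- case=> _ _ [[<- <-] | [/= e gI]]; split=> //; first by left.
  by right; split; [rewrite /= e | exact: cosets_genI gI cu].
- case=> _ _ [[/gmulI <- <-] | [/= /gmulI e gI]]; split=> //; first by left.
  right; split=> //=; rewrite -(gmulKVg h g); apply: genM => //.
  exact: genS gam12_sub gI.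
Qed.

Lemma edge_shift e u v : in_cosets u -> in_cosets v -> adom u -> adom v ->
  e \in beta -> edge A e u v -> edge B e (shift u) (shift v).
Proof.
move=> cu cv du dv eb [b [g [es gg] [ug vg]]].
have eg : e \in gam b by rewrite in_gam eb.
have cg := cosets_aeq cu ug; have cge := cosets_mulE cg eg.
exists b, (gmul (ginv h) g) => //; split; first exact/(shift_aeq cu cg du gg).
by rewrite -gmulA; apply/(shift_aeq cv cge dv); first exact: gen_mulE.
Qed.

Lemma shift_edge e u v : in_cosets u -> in_cosets v -> adom u -> adom v ->
  edge B e (shift u) (shift v) -> e \in beta /\ edge A e u v.
Proof.
move=> cu cv du dv [b [k [eg gk] [uk vk]]].
move: (eg); rewrite in_gam => /andP[eb es]; split=> //.
have dk := gen_side_hmul gk.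
have ck : in_cosets (gmul h k, b) by rewrite /in_cosets /shift /= gmulKg.
exists b, (gmul h k) => //; split; apply/shift_aeq => //; rewrite /shift /= ?gmulKg //.
- exact: cosets_mulE.
- exact: gen_mulE.
- by rewrite -gmulA gmulKg.
Qed.

Lemma component_iso_amalgam : egraph_iso (component A beta (g0, b0)) B.
Proof.
exists shift; split.
- by move=> v [_ /reach_cosets].
- by move=> u v [du /reach_cosets cu] [dv /reach_cosets cv]; apply: shift_aeq.
- move=> [k b] gk; exists (gmul h k, b); last by rewrite /shift /= gmulKg; apply: amal_eq_refl.
  have dk := gen_side_hmul gk.
  by split=> //; apply/(reach_coset _ gk (genS (I_sub b) gen_h))/reach_h.
- move=> e u v cdu cdv; have [du /reach_cosets cu] := cdu; have [dv /reach_cosets cv] := cdv.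
  split=> [[eb euv _ _] | /(shift_edge cu cv du dv) [eb euv]]; last by split.
  exact: edge_shift.
Qed.

End CosetMeetsI.

End AmalgamComponent.

Theorem mainTheorem10 (G : abs_group) (E : finType) (emb : E -> G)
    (HG : is_Egroup emb) (alpha1 alpha2 beta : {set E})
    (Ha1 : alpha1 \proper [set: E]) (Ha2 : alpha2 \proper [set: E])
    (Hb : beta \proper [set: E])
    (Hac1 : two_acyclic emb alpha1) (Hac2 : two_acyclic emb alpha2)
    (x : G * bool) (Hx : vdom (amalgam emb alpha1 alpha2) x) :
  let C := component (amalgam emb alpha1 alpha2) beta x in
  egraph_iso C (Cay emb (beta :&: alpha1)) \/
  egraph_iso C (Cay emb (beta :&: alpha2)) \/
  egraph_iso C (amalgam emb (beta :&: alpha1) (beta :&: alpha2)).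
Proof.
case: HG => _ _ emb_invol _ /=; case: x Hx => g0 b0 gen_g0.
pose gam := side (beta :&: alpha1) (beta :&: alpha2) b0.
have [[k0 gen_k0 gen_h] | miss] :=
  classic (exists2 k, gen emb gam k & gen emb (alpha1 :&: alpha2) (gmul g0 k)).
  by right; right; apply: component_iso_amalgam gen_g0 gen_k0 gen_h.
have {}miss k : gen emb gam k -> ~ gen emb (alpha1 :&: alpha2) (gmul g0 k).
  by move=> gk gI; apply: miss; exists k.
have := component_iso_Cay emb_invol gen_g0 miss.
by case: b0 @gam gen_g0 miss => *; [left | right; left].
Qed.
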